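(* Let $k, m \in \mathbb{N}$ with $k \ge 2$ and $m \ge 4$, and let $f$ be a valid bounds-function. If $\mathrm{pdp}_f(k,m) = \emptyset$, then $\mathrm{minvdeg}(\mathcal{MU}_{\delta=k}) < m$.
   Context: Literals come with a fixed-point-free involution $x \mapsto \overline{x}$; variables are positive literals. A clause is a finite set $C$ of literals with $C \cap \overline{C} = \emptyset$; a clause-set is a finite set of clauses. $\delta(F) = |F| - |\mathrm{var}(F)|$. $\mathcal{MU}_{\delta=k}$ is the class of minimally unsatisfiable clause-sets (unsatisfiable, but satisfiable after removing any clause) of deficiency $k$. $\mathrm{ld}_F(x)$ is the number of clauses containing $x$, $\mathrm{vdeg}_F(v) = \mathrm{ld}_F(v)+\mathrm{ld}_F(\overline{v})$, $\mathrm{minvdeg}(F) = \min_{v \in \mathrm{var}(F)}\mathrm{vdeg}_F(v)$; for a class $\mathcal{D}$, $\mathrm{minvdeg}(\mathcal{D})$ is the supremum of $\mathrm{minvdeg}(F)$ over $F \in \mathcal{D}$ with $\mathrm{var}(F) \ne \emptyset$. Let $\mu(k) = \mathrm{minvdeg}(\mathcal{MU}_{\delta=k})$. A valid bounds-function is a function $f : \mathbb{N} \to \mathbb{N} \cup \{+\infty\}$ with $f(1) = 2$, $f$ monotonically increasing, and $\mu(k) \le f(k)$ for all $k \in \mathbb{N}$. For $k \ge 2$, $m \ge 4$, the set $\mathrm{pdp}_f(k,m)$ of potential degree-pairs is the set of pairs $(e_0,e_1) \in \mathbb{N}^2$ with: (i) $e_0, e_1 \ge 2$; (ii) $e_0,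 e_1 \le k$; (iii) $e_0 + e_1 = m$; (iv) $e_0 \le e_1$; (v) $f(k - e_\varepsilon + 1) + e_\varepsilon \ge m$ for both $\varepsilon \in \{0,1\}$. *)

From mathcomp Require Import all_boot all_order all_algebra.
From mathcomp Require Import finmap.
Set Implicit Arguments. Unset Strict Implicit. Unset Printing Implicit Defensive.
Local Open Scope fset_scope.

(* Variables are natural numbers; a literal is a pair (v, b):
   (v, true) is the positive literal v, (v, false) is its complement. *)
Definition lit := (nat * bool)%type.
Definition compl (x : lit) : lit := (x.1, ~~ x.2).
Definition clause := {fset lit}.
Definition clauseset := {fset clause}.

Definition is_clause (C : clause) : Prop := forall x, x \in C -> compl x \notin C.
Definition is_clauseset (F : clauseset) : Prop := forall C, C \in F -> is_clause C.

Definition var (F : clauseset) : {fset nat} :=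
  [fset x.1 | x in \bigcup_(C <- F) C].

Definition deficiency (F : clauseset) : int := (Posz #|` F| - Posz #|` var F|)%R.

Definition sat_clause (phi : nat -> bool) (C : clause) : Prop :=
  exists x, x \in C /\ phi x.1 = x.2.
Definition satisfiable (F : clauseset) : Prop :=
  exists phi : nat -> bool, forall C, C \in F -> sat_clause phi C.

Definition MU (F : clauseset) : Prop :=
  is_clauseset F /\ ~ satisfiable F /\
  forall C, C \in F -> satisfiable (F `\ C).

Definition ld (F : clauseset) (x : lit) : nat := #|` [fset C in F | x \in C]|.
Definition vdeg (F : clauseset) (v : nat) : nat := ld F (v, true) + ld F (v, false).

(* minimum of vdeg over var F (the seed value \max ... makes the minimum
   correct whenever var F is nonempty; only that case is used) *)
Definition minvdeg (F : clauseset) : nat :=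
  \big[minn / \max_(v <- var F) vdeg F v]_(v <- var F) vdeg F v.

(* N ∪ {+oo}: None = +oo *)
Definition natinf := option nat.
Definition le_inf (a b : natinf) : Prop :=
  match a, b with
  | _, None => True
  | None, Some _ => False
  | Some x, Some y => (x <= y)%N
  end.
Definition add_inf (a : natinf) (n : nat) : natinf :=
  match a with None => None | Some x => Some (x + n)%N end.

Definition mu_ub (k : nat) (b : natinf) : Prop :=
  forall F : clauseset, MU F -> deficiency F = Posz k -> var F != fset0 ->
    le_inf (Some (minvdeg F)) b.
Definition is_mu (k : nat) (s : natinf) : Prop :=
  mu_ub k s /\ forall b, mu_ub k b -> le_inf s b.

Definition valid_bounds_function (f : nat -> natinf) : Prop :=
  f 1%N = Some 2%N /\
  (forall a b, (1 <= a)%N -> (a <= b)%N -> le_inf (f a) (f b)) /\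
  (forall k s, (1 <= k)%N -> is_mu k s -> le_inf s (f k)).

Definition pdp (f : nat -> natinf) (k m e0 e1 : nat) : Prop :=
  [/\ (2 <= e0)%N /\ (2 <= e1)%N,
      (e0 <= k)%N /\ (e1 <= k)%N,
      (e0 + e1)%N = m,
      (e0 <= e1)%N &
      le_inf (Some m) (add_inf (f (k - e0 + 1)%N) e0) /\
      le_inf (Some m) (add_inf (f (k - e1 + 1)%N) e1)].

(* Suppose some F in MU_{δ=k} has minvdeg F >= m, with |F| minimal.  Adding
   literals to clauses as long as the clause-set stays minimally unsatisfiable
   keeps |F|, var F and the deficiency and only raises degrees, so F may be
   taken saturated.  Let v be a variable of minimum degree and x one of its
   literals.  For saturated F the clause-set ⟨x -> 1⟩ * F is again minimally
   unsatisfiable, has the variables of F except v and deficiency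
   k - ld(x) + 1, so Tarsi's lemma (deficiency >= 1) gives ld(x) <= k; each
   degree drops by at most ld(x), so minvdeg F - ld(x) <= f(k - ld(x) + 1).
   If ld(x) = 1 the reduced clause-set has deficiency k, fewer clauses and no
   smaller minimum degree, contradicting minimality.  So both literal degrees
   of v are >= 2 and sum to minvdeg F >= m, and lowering them to sum exactly m
   yields a potential degree-pair. *)

From mathcomp Require Import all_boot all_order all_algebra.
From mathcomp Require Import finmap zify.
From Stdlib Require Import Classical.
From Stdlib Require Wf_nat.
Set Implicit Arguments. Unset Strict Implicit. Unset Printing Implicit Defensive.
Local Open Scope fset_scope.

Lemma complK : involutive compl.
Proof. by case=> v b; rewrite /compl /= negbK. Qed.

Lemma compl_neq x : compl x != x.
Proof. by case: x => v [] ; rewrite /compl /= -pair_eqE /= andbF. Qed.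

Lemma lit_eq_var (l y : lit) : l.1 = y.1 -> l = y \/ l = compl y.
Proof. by case: l y => v b [w c] /= ->; case: b; case: c; rewrite /compl /=; auto. Qed.

Lemma occ_lit (D : clause) l : l \in D -> ((l.1, true) \in D) || ((l.1, false) \in D).
Proof. by case: l => w [] /= ->; rewrite ?orbT. Qed.

Lemma mem_var (F : clauseset) w :
  w \in var F <-> exists C l, [/\ C \in F, l \in C & l.1 = w].
Proof.
split=> [/imfsetP [l /= /bigfcupP [C /andP [CF _] lC] ->]|[C [l [CF lC <-]]]].
  by exists C, l.
by apply/imfsetP; exists l => //=; apply/bigfcupP; exists C; rewrite ?CF.
Qed.

Lemma lit_var (F : clauseset) C l : C \in F -> l \in C -> l.1 \in var F.
Proof. by move=> CF lC; apply/mem_var; exists C, l. Qed.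

Lemma leq_fcard_in (T T' : choiceType) (A : {fset T}) (B : {fset T'}) (g : T -> T') :
  {in A &, injective g} -> {in A, forall x, g x \in B} -> #|` A| <= #|` B|.
Proof.
move=> g_inj gAB; rewrite -(eqP (introT (card_in_imfsetP _ _) g_inj)).
by apply: fsubset_leq_card; apply/fsubsetP => _ /imfsetP [x /= xA ->]; apply: gAB.
Qed.

Lemma card_fsep (T : choiceType) (A : {fset T}) (P : pred T) :
  (#|` [fset a in A | P a]| + #|` [fset a in A | ~~ P a]|)%N = #|` A|.
Proof.
rewrite -cardfsUI.
have -> : [fset a in A | P a] `&` [fset a in A | ~~ P a] = fset0.
  by apply/fsetP => a; rewrite !inE /=; case: (P a); rewrite !andbF.
have -> : [fset a in A | P a] `|` [fset a in A | ~~ P a] = A.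
  by apply/fsetP => a; rewrite !inE /=; case: (P a); rewrite ?andbT ?andbF ?orbF.
by rewrite cardfs0 addn0.
Qed.

Definition sat_clauses (phi : nat -> bool) (F : clauseset) :=
  forall C, C \in F -> sat_clause phi C.

Lemma sat_clause_sub phi C D : C `<=` D -> sat_clause phi C -> sat_clause phi D.
Proof. by move=> CD [l [lC pl]]; exists l; split=> //; apply: (fsubsetP CD). Qed.

Definition upd (phi : nat -> bool) w b := fun u => if u == w then b else phi u.

Lemma sat_clause_upd phi x C :
  sat_clause phi C -> compl x \notin C -> sat_clause (upd phi x.1 x.2) C.
Proof.
move=> [l [lC pl]] cxC; exists l; split=> //; rewrite /upd.
case: eqP => // /lit_eq_var [->|lx] //; by rewrite -lx lC in cxC.
Qed.

Lemma MU_antichain F C D : MU F -> C \in F -> D \in F -> C `<=` D -> C = D.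
Proof.
move=> [_ [unsat minF]] CF DF CD; apply: NNPP => nCD; apply: unsat.
have [phi sat_phi] := minF D DF; exists phi => E EF.
have [->|ED] := eqVneq E D; last by apply: sat_phi; rewrite in_fsetD1 ED EF.
by apply: (sat_clause_sub CD); apply: sat_phi; rewrite in_fsetD1 CF andbT; apply/eqP.
Qed.

Lemma MU_compl_occurs F C y :
  MU F -> C \in F -> y \in C -> exists2 D, D \in F & compl y \in D.
Proof.
move=> [_ [unsat minF]] CF yC; apply: NNPP => no_cy; apply: unsat.
have [phi sat_phi] := minF C CF; exists (upd phi y.1 y.2) => D DF.
case yD: (y \in D); first by exists y; rewrite /upd eqxx.
have DC : D != C by apply: contraFneq yD => ->.
apply: sat_clause_upd; first by apply: sat_phi; rewrite in_fsetD1 DC DF.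
by apply/negP => cyD; apply: no_cy; exists D.
Qed.

Lemma ld_MU_gt0 F v b : MU F -> v \in var F -> 0 < ld F (v, b).
Proof.
move=> muF /mem_var [C [l [CF lC lv]]].
have [e|e] := @lit_eq_var l (v, b) lv.
  by rewrite cardfs_gt0; apply/fset0Pn; exists C; rewrite !inE /= CF -e lC.
have [D DF cD] := MU_compl_occurs muF CF lC.
by rewrite cardfs_gt0; apply/fset0Pn; exists D; rewrite !inE /= DF -[(v, b)]complK -e cD.
Qed.

Definition occ (F : clauseset) w : clauseset :=
  [fset D in F | ((w, true) \in D) || ((w, false) \in D)].

Lemma vdeg_occ F w : is_clauseset F -> vdeg F w = #|` occ F w|.
Proof.
move=> clF; rewrite /vdeg /ld -cardfsUI.
have -> : [fset C in F | (w, true) \in C] `&` [fset C in F | (w, false) \in C] = fset0.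
  apply/fsetP => D; rewrite !inE /=; case DF: (D \in F); case tD: ((w, true) \in D) => //=.
  exact/negbTE/(clF D DF _ tD).
by rewrite cardfs0 addn0; congr #|` _|; apply/fsetP => D; rewrite !inE /=; case: (D \in F).
Qed.

Lemma vdeg_ld F x : vdeg F x.1 = (ld F x + ld F (compl x))%N.
Proof. by case: x => v [] //=; rewrite /vdeg addnC. Qed.

Lemma ld_single_var F v b :
  is_clauseset F -> {in var F, forall w, w = v} -> ld F (v, b) <= 1.
Proof.
move=> clF only_v; rewrite -(cardfs1 [fset (v, b)]); apply: fsubset_leq_card.
apply/fsubsetP => D; rewrite !inE /= => /andP [DF xD]; apply/eqP/fsetP => l.
rewrite inE; apply/idP/eqP => [lD|->//].
have [//|e] := @lit_eq_var l (v, b) (only_v _ (lit_var DF lD)).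
by move: (clF D DF _ xD); rewrite -e lD.
Qed.

(* Adding a new literal over [var F] to any clause of [F] makes it satisfiable. *)
Definition saturated (F : clauseset) :=
  forall C y, C \in F -> y \notin C -> compl y \notin C -> y.1 \in var F ->
  exists phi, sat_clauses phi (F `\ C) /\ phi y.1 = y.2.

Definition add_lit (F : clauseset) (C : clause) (y : lit) : clauseset :=
  (y |` C) |` (F `\ C).

Section AddLit.
Variables (F : clauseset) (C : clause) (y : lit).
Hypotheses (muF : MU F) (CF : C \in F) (yC : y \notin C).

Lemma add_lit_notin : y |` C \notin F `\ C.
Proof.
apply/negP => yCF; move: (yCF); rewrite in_fsetD1 => /andP [_ yCF'].
have eC := MU_antichain muF CF yCF' (fsubsetU1 _ _).
by move: yC; rewrite eC in_fset1U eqxx.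
Qed.

Lemma card_add_lit : #|` add_lit F C y| = #|` F|.
Proof. by rewrite cardfsU1 add_lit_notin (cardfsD1 C F) CF. Qed.

Lemma size_add_lit : \sum_(D <- add_lit F C y) #|` D| = (\sum_(D <- F) #|` D|).+1.
Proof. by rewrite big_fsetU1 ?add_lit_notin // (big_fsetD1 _ CF) cardfsU1 yC. Qed.

Lemma var_add_lit : y.1 \in var F -> var (add_lit F C y) = var F.
Proof.
move=> yF; apply/fsetP => w; apply/idP/idP => /mem_var [D [l [DF lD <-]]].
  move: DF; rewrite in_fset1U in_fsetD1 => /orP [/eqP eD|/andP [_ DF]]; last exact: lit_var lD.
  by move: lD; rewrite eD in_fset1U => /orP [/eqP ->|lC] //; apply: lit_var lC.
have [eD|DC] := eqVneq D C.
  by apply: (@lit_var _ (y |` C)); rewrite ?fset1U1 // in_fset1U -eD lD orbT.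
by apply: (@lit_var _ D); rewrite // in_fset1U in_fsetD1 DC DF orbT.
Qed.

Lemma ld_add_lit l : ld F l <= ld (add_lit F C y) l.
Proof.
pose g D := if D == C then y |` C else D.
apply: (@leq_fcard_in _ _ _ _ g) => [D E|D].
  rewrite !inE /= => /andP [DF _] /andP [EF _]; rewrite /g.
  have notin := add_lit_notin.
  case: eqVneq => [->|DC]; case: eqVneq => [->|EC] // eDE.
  - by move: notin; rewrite eDE in_fsetD1 EC EF.
  - by move: notin; rewrite -eDE in_fsetD1 DC DF.
rewrite !inE /= => /andP [DF lD]; rewrite /g.
have [<-|DC] := eqVneq D C; first by rewrite eqxx /= in_fset1U lD orbT.
by rewrite (negbTE DC) /= DF lD orbT.
Qed.

Hypotheses (cyC : compl y \notin C)
  (unsat_y : forall phi, sat_clauses phi (F `\ C) -> phi y.1 <> y.2).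

Lemma MU_add_lit : MU (add_lit F C y).
Proof.
have [clF [unsat minF]] := muF.
split; [|split].
- move=> D; rewrite in_fset1U in_fsetD1 => /orP [/eqP -> x|/andP [_ DF]]; last exact: clF.
  rewrite !in_fset1U => /orP [/eqP ->|xC]; first by rewrite negb_or compl_neq.
  by rewrite negb_or clF // andbT; apply: contra cyC => /eqP <-; rewrite complK.
- move=> [phi sat_phi]; apply: unsat; exists phi => D DF.
  have satFC : sat_clauses phi (F `\ C).
    by move=> E EFC; apply: sat_phi; rewrite in_fset1U EFC orbT.
  have [->|DC] := eqVneq D C; last by apply: satFC; rewrite in_fsetD1 DC DF.
  have [l [+ pl]] := sat_phi _ (fset1U1 _ _); rewrite in_fset1U => /orP [/eqP ly|lC].
    by case: (unsat_y satFC); rewrite -ly.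
  by exists l.
- move=> D; rewrite in_fset1U => /orP [/eqP ->|].
    suff -> : add_lit F C y `\ (y |` C) = F `\ C by apply: minF.
    by rewrite /add_lit fsetU1K // add_lit_notin.
  rewrite in_fsetD1 => /andP [DC DF]; have [phi sat_phi] := minF D DF.
  exists phi => E; rewrite in_fsetD1 in_fset1U => /andP [ED /orP [/eqP ->|]].
    have [l [lC pl]] : sat_clause phi C by apply: sat_phi; rewrite in_fsetD1 eq_sym DC CF.
    by exists l; rewrite in_fset1U lC orbT.
  by rewrite in_fsetD1 => /andP [_ EF]; apply: sat_phi; rewrite in_fsetD1 ED EF.
Qed.

End AddLit.

Definition lits (F : clauseset) : {fset lit} :=
  [fset (w, true) | w in var F] `|` [fset (w, false) | w in var F].

Lemma size_clauses_le (F : clauseset) : \sum_(D <- F) #|` D| <= #|` F| * #|` lits F|.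
Proof.
have card_le D : D \in F -> #|` D| <= #|` lits F|.
  move=> DF; apply: fsubset_leq_card; apply/fsubsetP => -[w b] lD.
  have wF := lit_var DF lD; rewrite in_fsetU.
  by case: b {lD} in wF *; apply/orP; [left|right]; apply/imfsetP; exists w.
rewrite mulnC -iter_addn_0 -[#|` F|]count_predT -big_const_seq.
by rewrite big_seq [X in _ <= X]big_seq; apply: leq_sum.
Qed.

(* Each step adds a literal over [var F] to a clause, so the total clause size
   grows but stays below [#|F| * #|lits F|]. *)
Lemma saturation F : MU F ->
  exists F', [/\ MU F', #|` F'| = #|` F|, var F' = var F,
    (forall l, ld F l <= ld F' l) & saturated F'].
Proof.
have [n] := ubnP (#|` F| * #|` lits F| - \sum_(D <- F) #|` D|).
elim: n F => // n IH F measF muF.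
have [satF|unsatF] := classic (saturated F); first by exists F; split.
have [C [y [CF yC cyC yF unsat_y]]] : exists C y, [/\ C \in F, y \notin C, compl y \notin C,
    y.1 \in var F & forall phi, sat_clauses phi (F `\ C) -> phi y.1 <> y.2].
  apply: NNPP => none; apply: unsatF => C y CF yC cyC yF; apply: NNPP => no_phi.
  by apply: none; exists C, y; split=> // phi sat_phi e; apply: no_phi; exists phi.
have [||F' [muF' cardF' varF' ldF' satF']] := IH (add_lit F C y).
- have := size_clauses_le (add_lit F C y).
  rewrite /lits var_add_lit // card_add_lit // size_add_lit // -/(lits F); lia.
- exact: MU_add_lit.
exists F'; rewrite cardF' varF' card_add_lit // var_add_lit //; split=> // l.
exact: leq_trans (ld_add_lit muF CF yC l) (ldF' l).
Qed.

Lemma bigmin_le_seq (T : eqType) (s : seq T) (g : T -> nat) x0 a :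
  a \in s -> \big[minn/x0]_(i <- s) g i <= g a.
Proof.
elim: s => [//|b s IH]; rewrite in_cons big_cons => /orP [/eqP ->|as_].
  exact: geq_minl.
exact: leq_trans (geq_minr _ _) (IH as_).
Qed.

Lemma minvdeg_le F v : v \in var F -> minvdeg F <= vdeg F v.
Proof. exact: bigmin_le_seq. Qed.

Lemma minvdeg_ge F n :
  var F != fset0 -> {in var F, forall v, n <= vdeg F v} -> n <= minvdeg F.
Proof.
move=> /fset0Pn [v vF] ge_n; rewrite /minvdeg big_seq.
apply: (big_ind (fun a => n <= a)) => [|a b na nb|w wF]; last exact: ge_n.
  exact: leq_trans (ge_n v vF) (leq_bigmax_seq _ vF _).
by rewrite leq_min na nb.
Qed.

Lemma minvdeg_attained F :
  var F != fset0 -> exists2 v, v \in var F & vdeg F v = minvdeg F.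
Proof.
move=> /[dup] /fset0Pn [v0 v0F] varF.
have exP : exists n, has (fun v => vdeg F v == n) (var F).
  by exists (vdeg F v0); apply/hasP; exists v0.
case: (ex_minnP exP) => n /hasP [v vF /eqP vdeg_v] min_n.
exists v => //; apply/eqP; rewrite eqn_leq minvdeg_le // andbT vdeg_v.
by apply: minvdeg_ge => // w wF; apply: min_n; apply/hasP; exists w.
Qed.

Definition assign_lit (F : clauseset) (x : lit) : clauseset :=
  [fset D `\ compl x | D in [fset D in F | x \notin D]].

Section AssignLit.
Variables (F : clauseset) (x : lit).
Hypotheses (muF : MU F) (xF : x.1 \in var F).

Local Notation G := (assign_lit F x).

Lemma mem_assign_lit E :
  E \in G <-> exists D, [/\ D \in F, x \notin D & E = D `\ compl x].
Proof.
split=> [/imfsetP [D /=]|[D [DF xD ->]]].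
  by rewrite !inE /= => /andP [DF xD] ->; exists D.
by apply/imfsetP; exists D; rewrite //= !inE /= DF xD.
Qed.

Lemma fsetD1_compl_inj : {in [fset D in F | x \notin D] &, injective (fun D => D `\ compl x)}.
Proof.
have key D E : D \in F -> E \in F -> compl x \in D -> compl x \notin E ->
    D `\ compl x = E `\ compl x -> D = E.
  move=> DF EF cD cE eDE; apply/esym/(MU_antichain muF EF DF).
  by rewrite -(fsetD1K cD) eDE (mem_fsetD1 cE) fsubsetU1.
move=> D E; rewrite !inE /= => /andP [DF _] /andP [EF _] eDE.
case cD: (compl x \in D); case cE: (compl x \in E).
- by rewrite -(fsetD1K cD) -(fsetD1K cE) eDE.
- by apply: key; rewrite ?cE.
- by apply/esym/key; rewrite ?cD.
- by move: eDE; rewrite !mem_fsetD1 ?cD ?cE.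
Qed.

Lemma card_assign_lit : (#|` G| + ld F x)%N = #|` F|.
Proof.
by rewrite (eqP (introT (card_in_imfsetP _ _) fsetD1_compl_inj)) addnC card_fsep.
Qed.

Lemma sat_assign_lit psi : sat_clauses psi G -> sat_clauses (upd psi x.1 x.2) F.
Proof.
move=> sat_psi D DF; case xD: (x \in D); first by exists x; rewrite /upd eqxx.
apply: (@sat_clause_sub _ (D `\ compl x)); first exact: fsubsetDl.
apply: sat_clause_upd; last by rewrite in_fsetD1 eqxx.
by apply: sat_psi; apply/mem_assign_lit; exists D; rewrite xD.
Qed.

Lemma var_assign_lit_sub : var G `<=` var F `\ x.1.
Proof.
apply/fsubsetP => w /mem_var [E [l [/mem_assign_lit [D [DF xD ->]] lE <-]]].
move: lE; rewrite in_fsetD1 => /andP [lcx lD].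
rewrite in_fsetD1 (lit_var DF lD) andbT.
apply/eqP => /lit_eq_var [lx|lx]; first by rewrite -lx lD in xD.
by rewrite lx eqxx in lcx.
Qed.

Lemma clauseset_assign_lit : is_clauseset G.
Proof.
have [clF _] := muF.
move=> E /mem_assign_lit [D [DF _ ->]] l; rewrite !in_fsetD1 => /andP [_ lD].
by rewrite (negbTE (clF D DF l lD)) andbF.
Qed.

Lemma vdeg_assign_lit w : w != x.1 ->
  vdeg F w <= vdeg G w + #|` [fset D in occ F w | x \in D]|.
Proof.
have [clF _] := muF.
move=> wx; rewrite (vdeg_occ _ clF) (vdeg_occ _ clauseset_assign_lit).
rewrite -(card_fsep (occ F w) (fun D => x \in D)) addnC leq_add2r.
have wcx b : (w, b) != compl x by apply: contra wx => /eqP/(congr1 fst) /= ->.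
apply: (@leq_fcard_in _ _ _ _ (fun D => D `\ compl x)) => [D E|D].
  by rewrite !inE /= => /andP [/andP [DF _] xD] /andP [/andP [EF _] xE]; apply: fsetD1_compl_inj;
    rewrite !inE /= ?DF ?EF.
rewrite !inE /= => /andP [/andP [DF wD] xD].
have DG : D `\ compl x \in G by apply/mem_assign_lit; exists D.
by rewrite !wcx /= wD andbT.
Qed.

Lemma mem_var_assign_lit w :
  w \in var F -> w != x.1 -> ld F x < vdeg F w -> w \in var G.
Proof.
have [clF _] := muF.
move=> wF wx; rewrite (vdeg_occ _ clF) => lt_x_w.
have : ~~ (occ F w `<=` [fset D in F | x \in D]).
  by apply: contraTN lt_x_w => /fsubset_leq_card; rewrite -leqNgt.
case/fsubsetPn => D; rewrite !inE /= => /andP [DF wD]; rewrite DF /= => xD.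
have DG : D `\ compl x \in G by apply/mem_assign_lit; exists D.
have wcx b : (w, b) != compl x by apply: contra wx => /eqP/(congr1 fst) /= ->.
by case/orP: wD => wD; [apply: (lit_var DG (l := (w, true)))|apply: (lit_var DG (l := (w, false)))];
  rewrite in_fsetD1 wcx.
Qed.

Lemma var_assign_lit : ld F x < minvdeg F -> var G = var F `\ x.1.
Proof.
move=> lt_x; apply/eqP; rewrite eqEfsubset var_assign_lit_sub /=.
apply/fsubsetP => w; rewrite in_fsetD1 => /andP [wx wF].
exact: mem_var_assign_lit (leq_trans lt_x (minvdeg_le wF)).
Qed.

Lemma deficiency_assign_lit : ld F x < minvdeg F ->
  deficiency G = (deficiency F - Posz (ld F x) + 1)%R.
Proof.
move=> lt_x; have := cardfsD1 x.1 (var F); rewrite xF -var_assign_lit //.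
by rewrite /deficiency -card_assign_lit; lia.
Qed.

Hypothesis satF : saturated F.

Lemma MU_assign_lit : MU G.
Proof.
have [clF [unsat minF]] := muF.
split; [exact: clauseset_assign_lit|split].
  by move=> [psi sat_psi]; apply: unsat; exists (upd psi x.1 x.2); apply: sat_assign_lit.
move=> _ /mem_assign_lit [D [DF xD ->]].
have [phi [sat_phi phix]] : exists phi, sat_clauses phi (F `\ D) /\ phi x.1 = x.2.
  case cxD: (compl x \in D).
    have [phi sat_phi] := minF D DF; exists phi; split=> //.
    apply: NNPP => phix; apply: unsat; exists phi => C CF.
    have [->|CD] := eqVneq C D; last by apply: sat_phi; rewrite in_fsetD1 CD CF.
    exists (compl x); split=> //; apply/eqP; move/eqP: phix.
    by rewrite /compl /=; case: (phi x.1); case: (x.2).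
  by apply: satF; rewrite ?cxD.
exists phi => E'; rewrite in_fsetD1 => /andP [E'D /mem_assign_lit [E [EF xE eE']]].
have ED : E != D by apply: contraNneq E'D => eED; rewrite eE' eED.
have [l [lE pl]] : sat_clause phi E by apply: sat_phi; rewrite in_fsetD1 ED EF.
exists l; split=> //; rewrite eE' in_fsetD1 lE andbT.
by apply/eqP => lcx; move: pl; rewrite lcx /= phix; case: (x.2).
Qed.

End AssignLit.

Section UnitLit.
Variables (F : clauseset) (C : clause) (x : lit).
Hypotheses (muF : MU F) (CF : C \in F) (xC : x \in C)
  (x_only_in_C : forall D, D \in F -> x \in D -> D = C).

(* Otherwise flipping x to false would satisfy all of F: C through [yw], the
   clauses with [compl x] through [compl x], and the others as before. *)
Lemma unit_lit_falsify D phi yw : D \in F -> compl x \in D ->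
  sat_clauses phi (F `\ D) -> yw \in C -> yw.1 != x.1 -> phi yw.1 <> yw.2.
Proof.
have [_ [unsat _]] := muF.
move=> DF cxD sat_phi ywC ywx phi_yw.
have phix : phi x.1 = x.2.
  apply: NNPP => phix; apply: unsat; exists phi => E EF.
  have [->|ED] := eqVneq E D; last by apply: sat_phi; rewrite in_fsetD1 ED EF.
  exists (compl x); split=> //; apply/eqP; move/eqP: phix.
  by rewrite /compl /=; case: (phi x.1); case: (x.2).
apply: unsat; exists (upd phi x.1 (~~ x.2)) => E EF.
case cxE: (compl x \in E); first by exists (compl x); rewrite /upd /compl /= eqxx.
have [->|EC] := eqVneq E C; first by exists yw; rewrite /upd (negbTE ywx).
have ED : E != D by apply: contraFneq cxE => ->.
have [l [lE pl]] : sat_clause phi E by apply: sat_phi; rewrite in_fsetD1 ED EF.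
exists l; split=> //; rewrite /upd; case: eqP => // /lit_eq_var [lx|lx].
  by move: EC; rewrite (x_only_in_C EF) ?eqxx // -lx.
by rewrite -lx lE in cxE.
Qed.

Hypothesis satF : saturated F.

Lemma unit_lit_sub D yw : D \in F -> compl x \in D -> yw \in C -> yw.1 != x.1 -> yw \in D.
Proof.
have [_ [unsat minF]] := muF.
move=> DF cxD ywC ywx; have [phi sat_phi] := minF D DF.
have cywD : compl yw \notin D.
  apply/negP => cywD; apply: unsat; exists phi => E EF.
  have [->|ED] := eqVneq E D; last by apply: sat_phi; rewrite in_fsetD1 ED EF.
  exists (compl yw); split=> //; apply/eqP; apply/negP => /eqP phi_cyw.
  by apply: (unit_lit_falsify DF cxD sat_phi ywC ywx); move: phi_cyw; rewrite /compl /=;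
    case: (phi yw.1); case: (yw.2).
apply: NNPP => /negP ywD.
have [psi [sat_psi psi_yw]] := satF DF ywD cywD (lit_var CF ywC).
exact: unit_lit_falsify DF cxD sat_psi ywC ywx psi_yw.
Qed.

(* Besides [C] and a clause containing [compl yw], every clause containing
   [compl x] contains [yw]. *)
Lemma vdeg_unit_lit yw : yw \in C -> yw.1 != x.1 -> (ld F (compl x) + 2 <= vdeg F yw.1)%N.
Proof.
have [clF _] := muF.
move=> ywC ywx; have [E EF cywE] := MU_compl_occurs muF CF ywC.
pose A := [fset D in F | compl x \in D].
have CA : C \notin A by rewrite !inE /= CF /= (clF C CF x xC).
have EA : E \notin A.
  rewrite !inE /= EF /=; apply/negP => cxE.
  by move: (clF E EF _ (unit_lit_sub EF cxE ywC ywx)); rewrite cywE.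
have CE : C != E by apply: contraTneq cywE => <-; apply: clF.
have -> : (ld F (compl x) + 2)%N = #|` C |` (E |` A)|.
  by rewrite !cardfsU1 EA in_fset1U negb_or CE CA addnC.
rewrite (vdeg_occ _ clF); apply: fsubset_leq_card; apply/fsubsetP => D.
rewrite !in_fset1U => /orP [/eqP ->|/orP [/eqP ->|]].
- by rewrite !inE /= CF (occ_lit ywC).
- by rewrite !inE /= EF (occ_lit cywE).
- rewrite !inE /= => /andP [DF cxD].
  by rewrite DF (occ_lit (unit_lit_sub DF cxD ywC ywx)).
Qed.

End UnitLit.

Section MinvdegAssignLit.
Variables (F : clauseset) (x : lit).
Hypotheses (muF : MU F) (satF : saturated F) (xF : x.1 \in var F)
  (lt_x : ld F x < minvdeg F) (varG : var (assign_lit F x) != fset0).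

Lemma minvdeg_assign_lit : minvdeg F - ld F x <= minvdeg (assign_lit F x).
Proof.
apply: minvdeg_ge => // w; rewrite var_assign_lit // in_fsetD1 => /andP [wx wF].
have := vdeg_assign_lit muF wx; have := minvdeg_le wF.
have : #|` [fset D in occ F w | x \in D]| <= ld F x.
  by apply: fsubset_leq_card; apply/fsubsetP => D; rewrite !inE /= => /andP [/andP [-> _] ->].
lia.
Qed.

Lemma minvdeg_assign_unit_lit : ld F x = 1 -> minvdeg F <= minvdeg (assign_lit F x).
Proof.
move=> ld_x1; have /cardfs1P [C eC] : #|` [fset D in F | x \in D]| == 1 by apply/eqP.
have /andP [CF xC] : (C \in F) && (x \in C) by move: (fset11 C); rewrite -eC !inE.
have x_only_in_C D : D \in F -> x \in D -> D = C.
  by move=> DF xD; apply/fset1P; rewrite -eC !inE /= DF xD.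
apply: minvdeg_ge => // w; rewrite var_assign_lit // in_fsetD1 => /andP [wx wF].
have vdeg_w := vdeg_assign_lit muF wx; have min_w := minvdeg_le wF.
have [X0|[D DX]] := fset_0Vmem [fset D in occ F w | x \in D].
  by move: vdeg_w; rewrite X0 cardfs0; lia.
have X1 : #|` [fset D in occ F w | x \in D]| <= 1.
  rewrite -(cardfs1 C); apply: fsubset_leq_card; apply/fsubsetP => E.
  by rewrite !inE /= => /andP [/andP [EF _] xE]; rewrite (x_only_in_C _ EF xE).
move: DX; rewrite !inE /= => /andP [/andP [DF wD] xD]; move: wD; rewrite (x_only_in_C _ DF xD).
move=> wC; have [yw ywC yw_w] : exists2 yw, yw \in C & yw.1 = w.
  by case/orP: wC => ?; [exists (w, true)|exists (w, false)].
have := vdeg_unit_lit muF CF xC x_only_in_C satF ywC; rewrite yw_w => /(_ wx).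
have := vdeg_ld F x; have := minvdeg_le xF; lia.
Qed.

End MinvdegAssignLit.

Section Tarsi.
Import Order.TTheory GRing.Theory Num.Theory.
Local Open Scope ring_scope.

Lemma sumr_ge0_pos_term (R : realDomainType) n (a : 'I_n -> R) :
  0 <= \sum_i a i -> (exists i, a i != 0) -> exists i, 0 < a i.
Proof.
move=> sum_ge0 [i0 ai0]; apply: NNPP => no_pos.
have le0 i : a i <= 0 by rewrite leNgt; apply/negP => ai; apply: no_pos; exists i.
have ai0_lt0 : a i0 < 0 by rewrite lt_neqAle ai0 le0.
have rest : \sum_(i | i != i0) a i <= 0 by apply: sumr_le0 => i _; apply: le0.
have : \sum_i a i < 0.
  by rewrite (bigD1 i0) //=; apply: (lt_le_trans (ltr_leD ai0_lt0 rest)); rewrite addr0.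
by rewrite ltNge sum_ge0.
Qed.

Variable F : clauseset.
Local Notation n := #|` var F|.
Local Notation p := #|` F|.

Let vr (i : 'I_n) : nat := nth 0%N (var F) i.
Let cl (j : 'I_p) : clause := nth fset0 F j.

Let M : 'M[rat]_(n, p) :=
  \matrix_(i, j) ((((vr i, true) \in cl j) : nat)%:R - (((vr i, false) \in cl j) : nat)%:R).

Let coord (y : 'rV[rat]_n) (w : nat) : rat :=
  if insub (index w (var F)) is Some i then y 0 i else 0.

Let coord_vr y i : coord y (vr i) = y 0 i.
Proof. by rewrite /coord /vr index_uniq ?fset_uniq // valK. Qed.

Let clause_index D : D \in F -> exists j, cl j = D.
Proof.
move=> DF; have jp : (index D F < p)%N by rewrite index_mem.
by exists (Ordinal jp); rewrite /cl nth_index.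
Qed.

Let var_index w : w \in var F -> exists i, vr i = w.
Proof.
move=> wF; have ip : (index w (var F) < n)%N by rewrite index_mem.
by exists (Ordinal ip); rewrite /vr nth_index.
Qed.

Let sat_of_pos_term chi (y : 'rV[rat]_n) i j :
  0 < y 0 i * M i j -> chi (vr i) = (0 < y 0 i) -> sat_clause chi (cl j).
Proof.
rewrite mxE => + chi_i.
case tj: ((vr i, true) \in cl j); case fj: ((vr i, false) \in cl j) => /=;
  rewrite ?subrr ?mulr0 ?ltxx // ?subr0 ?mulr1 ?sub0r ?mulrN1 ?oppr_gt0 => y_i.
  by exists (vr i, true); rewrite chi_i y_i.
by exists (vr i, false); split=> //=; rewrite chi_i; apply/negbTE; rewrite -leNgt ltW.
Qed.

Let M_neq0 i j l : l \in cl j -> compl l \notin cl j -> l.1 = vr i -> M i j != 0.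
Proof.
rewrite mxE; case: l => w [] /= lD; rewrite /compl /= => /negbTE cl_j <-;
  by rewrite lD cl_j ?subr0 ?sub0r ?oppr_eq0 oner_neq0.
Qed.

(* Such a [y] is a linear autarky: the assignment given by the signs of its
   coordinates satisfies every clause touched by [y], so together with an
   assignment satisfying all clauses but one touched clause it satisfies [F]. *)
Let MU_no_linear_autarky (y : 'rV[rat]_n) :
  MU F -> y != 0 -> (forall j, 0 <= (y *m M) 0 j) -> False.
Proof.
move=> [clF [unsat minF]] /rV0Pn [i0 y_i0] yM_ge0.
have [D0 [l0 [D0F l0D0 l0i0]]] := (mem_var F (vr i0)).1 (mem_nth 0%N (ltn_ord i0)).
have [psi sat_psi] := minF D0 D0F.
pose chi w := if coord y w != 0 then 0 < coord y w else psi w.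
apply: unsat; exists chi => D DF; have [j eD] := clause_index DF; rewrite -eD in DF *.
have [[i yMij]|untouched] := classic (exists i, y 0 i * M i j != 0).
  have [i' pos] : exists i, 0 < y 0 i * M i j.
    by apply: sumr_ge0_pos_term; [have := yM_ge0 j; rewrite !mxE | exists i].
  apply: (sat_of_pos_term pos); rewrite /chi coord_vr.
  by have -> : y 0 i' != 0 by apply: contraTneq pos => ->; rewrite mul0r ltxx.
have jD0 : cl j != D0.
  apply/eqP => eD0; apply: untouched; exists i0; rewrite mulf_neq0 //.
  by apply: (M_neq0 (l := l0)); rewrite ?eD0 // clF.
have [l [lD pl]] : sat_clause psi (cl j) by apply: sat_psi; rewrite in_fsetD1 jD0 DF.
have [i li] := var_index (lit_var DF lD).
exists l; split=> //; rewrite /chi -li coord_vr.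
have [y_i|y_i] := eqVneq (y 0 i) 0; first by rewrite /= li.
by case: untouched; exists i; rewrite mulf_neq0 // (M_neq0 (l := l)) // clF.
Qed.

Lemma MU_var_lt : MU F -> (#|` var F| < #|` F|)%N.
Proof.
move=> muF; rewrite ltnNge; apply/negP => le_pn.
have [rkM|rkM] := ltnP (\rank M) n.
  have /matrix0Pn [i [k ker_ik]] : kermx M != 0.
    by rewrite -mxrank_eq0 mxrank_ker subn_eq0 -ltnNge.
  apply: (@MU_no_linear_autarky (row i (kermx M))) => //.
    by apply/rV0Pn; exists k; rewrite mxE.
  by move=> j; rewrite -row_mul mulmx_ker row0 mxE.
have rfM : row_full M by rewrite /row_full eqn_leq rank_leq_col (leq_trans le_pn rkM).
have /submxP [y yM] := submx_full (const_mx 1 : 'rV[rat]_p) rfM.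
have [F0|[D DF]] := fset_0Vmem F.
  by case: muF => _ [unsat _]; apply: unsat; exists xpredT => C; rewrite F0 in_fset0.
have [j _] := clause_index DF.
apply: (@MU_no_linear_autarky y) => // [|j']; last by rewrite -yM mxE ler01.
apply/eqP => y0; move/matrixP: yM => /(_ 0 j); rewrite y0 mul0mx !mxE.
by apply/eqP; exact: oner_neq0.
Qed.

End Tarsi.

Lemma le_inf_trans a b c : le_inf a b -> le_inf b c -> le_inf a c.
Proof. by case: a; case: b; case: c => //= x y z; apply: leq_trans. Qed.

Lemma is_mu_exists k : exists s, is_mu k s.
Proof.
have [inh|none] := classic (exists b, mu_ub k (Some b)); last first.
  by exists None; split=> // -[b|] //= ub_b; case: none; exists b.
have [b [[ub_b least] _]] :=
  Wf_nat.dec_inh_nat_subset_has_unique_least_element _ (fun b => classic _) inh.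
by exists (Some b); split=> // -[c|] //= ub_c; apply/leP/least.
Qed.

Lemma minvdeg_le_f f k F : valid_bounds_function f -> 0 < k -> MU F ->
  deficiency F = Posz k -> var F != fset0 -> le_inf (Some (minvdeg F)) (f k).
Proof.
move=> [_ [_ f_ge_mu]] k_gt0 muF defF varF; have [s [ub_s least_s]] := is_mu_exists k.
exact: le_inf_trans (ub_s F muF defF varF) (f_ge_mu k s k_gt0 (conj ub_s least_s)).
Qed.

Lemma exists_other_var F v :
  MU F -> 2 < minvdeg F -> v \in var F -> exists2 w, w \in var F & w != v.
Proof.
move=> [clF _] min_gt2 vF; apply: NNPP => none.
have only_v : {in var F, forall w, w = v}.
  by move=> w wF; apply: NNPP => /eqP wv; apply: none; exists w.
have := leq_add (ld_single_var true clF only_v) (ld_single_var false clF only_v).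
by move=> /(leq_trans (minvdeg_le vF)); rewrite leqNgt min_gt2.
Qed.

Section SaturatedAssignLit.
Variables (F : clauseset) (x : lit) (k : nat).
Hypotheses (muF : MU F) (satF : saturated F) (defF : deficiency F = Posz k)
  (xF : x.1 \in var F) (lt_x : ld F x < minvdeg F).

Local Notation G := (assign_lit F x).

Lemma ld_le_deficiency : ld F x <= k.
Proof.
have := MU_var_lt (MU_assign_lit muF xF satF).
have := deficiency_assign_lit muF xF lt_x; rewrite defF /deficiency; lia.
Qed.

Lemma deficiency_assign_lit_nat : deficiency G = Posz (k - ld F x + 1)%N.
Proof.
have := deficiency_assign_lit muF xF lt_x; have := ld_le_deficiency; rewrite defF; lia.
Qed.

Variable w0 : nat.
Hypotheses (w0F : w0 \in var F) (w0x : w0 != x.1).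

Lemma var_assign_lit_neq0 : var G != fset0.
Proof.
apply/fset0Pn; exists w0.
by rewrite (var_assign_lit muF lt_x) in_fsetD1 w0x.
Qed.

Lemma assign_unit_lit : ld F x = 1 ->
  [/\ MU G, deficiency G = Posz k, var G != fset0, #|` G| < #|` F| & minvdeg F <= minvdeg G].
Proof.
move=> ld1; split.
- exact: MU_assign_lit.
- by rewrite deficiency_assign_lit_nat ld1 subnK //; have := ld_le_deficiency; rewrite ld1.
- exact: var_assign_lit_neq0.
- by rewrite -(card_assign_lit x muF) ld1 addn1.
- exact: minvdeg_assign_unit_lit muF satF xF lt_x var_assign_lit_neq0 ld1.
Qed.

Lemma minvdeg_assign_lit_le_f f : valid_bounds_function f ->
  le_inf (Some (minvdeg F - ld F x)%N) (f (k - ld F x + 1)%N).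
Proof.
move=> vf; apply: le_inf_trans (minvdeg_le_f vf _ (MU_assign_lit muF xF satF)
  deficiency_assign_lit_nat var_assign_lit_neq0) => //=.
  exact: minvdeg_assign_lit muF xF lt_x var_assign_lit_neq0.
by rewrite addn1.
Qed.

End SaturatedAssignLit.

Lemma pdp_bound_mono f k m t e a : valid_bounds_function f ->
  le_inf (Some t) (f (k - e + 1)%N) -> a <= e <= k -> m <= t + a ->
  le_inf (Some m) (add_inf (f (k - a + 1)%N) a).
Proof.
move=> [_ [f_mono _]] t_le /andP [ae ek] mta.
have : le_inf (f (k - e + 1)%N) (f (k - a + 1)%N) by apply: f_mono; lia.
by case: (f _) t_le => [u|]; case: (f _) => [u'|] //=; lia.
Qed.

(* Shrink [e0] and [e1] down to a sum of exactly [m], keeping both at least 2;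
   the bound conditions survive because [f] is monotone. *)
Lemma pdp_of_split f k m e0 e1 : valid_bounds_function f -> 4 <= m -> m <= e0 + e1 ->
  2 <= e0 <= k -> 2 <= e1 <= k ->
  le_inf (Some e1) (f (k - e0 + 1)%N) -> le_inf (Some e0) (f (k - e1 + 1)%N) ->
  exists e0' e1', pdp f k m e0' e1'.
Proof.
move=> vf m_ge4 m_le /andP [e0_ge2 e0_le] /andP [e1_ge2 e1_le] f0 f1.
pose r := minn (e0 + e1 - m) (e0 - 2).
pose a := e0 - r; pose b := e1 - (e0 + e1 - m - r).
have fa : le_inf (Some m) (add_inf (f (k - a + 1)%N) a).
  by apply: (pdp_bound_mono vf f0); rewrite /a /r; lia.
have fb : le_inf (Some m) (add_inf (f (k - b + 1)%N) b).
  by apply: (pdp_bound_mono vf f1); rewrite /b /r; lia.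
have [ab|ba] := leqP a b.
  by exists a, b; split=> //; rewrite /a /b /r; lia.
by exists b, a; split=> //; rewrite /a /b /r in ba *; lia.
Qed.

Section Descent.
Variables (f : nat -> natinf) (k m : nat).
Hypotheses (vf : valid_bounds_function f) (m_ge4 : 4 <= m)
  (no_pdp : forall e0 e1, ~ pdp f k m e0 e1).

Lemma MU_minvdeg_lt F : MU F -> deficiency F = Posz k -> var F != fset0 -> minvdeg F < m.
Proof.
have [n] := ubnP #|` F|; elim: n F => // n IH F cardF muF defF varF.
rewrite ltnNge; apply/negP => m_le.
have [F1 [muF1 cardF1 varF1 ldF1 satF1]] := saturation muF.
have defF1 : deficiency F1 = Posz k by rewrite /deficiency cardF1 varF1.
have varF1_neq0 : var F1 != fset0 by rewrite varF1.
have m_le1 : m <= minvdeg F1.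
  apply: minvdeg_ge => // w; rewrite varF1 => wF.
  exact: leq_trans m_le (leq_trans (minvdeg_le wF) (leq_add (ldF1 _) (ldF1 _))).
have [v vF1 vdeg_v] := minvdeg_attained varF1_neq0.
have [w0 w0F1 w0v] := exists_other_var muF1 (leq_trans (ltnW m_ge4) m_le1) vF1.
have ld_neq1 b : ld F1 (v, b) != 1.
  apply/eqP => ld1; have lt_x : ld F1 (v, b) < minvdeg F1 by rewrite ld1; lia.
  have [muG defG varG cardG minG] :=
    @assign_unit_lit _ (v, b) _ muF1 satF1 defF1 vF1 lt_x _ w0F1 w0v ld1.
  have := IH _ (leq_trans cardG _) muG defG varG; rewrite cardF1 ltnNge.
  by rewrite (leq_trans m_le1 minG) => /(_ cardF).
have ld_ge2 b : 1 < ld F1 (v, b) by rewrite ltn_neqAle eq_sym ld_neq1 ld_MU_gt0.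
have bound b : let x := (v, b) in
    ld F1 x <= k /\ le_inf (Some (ld F1 (compl x))) (f (k - ld F1 x + 1)%N).
  move=> x; have xF1 : x.1 \in var F1 by [].
  have lt_x : ld F1 x < minvdeg F1.
    by rewrite -vdeg_v (vdeg_ld F1 x) -addn1 leq_add2l; apply: ltnW (ld_ge2 (~~ b)).
  split; first exact: ld_le_deficiency muF1 satF1 defF1 xF1 lt_x.
  have -> : ld F1 (compl x) = (minvdeg F1 - ld F1 x)%N by rewrite -vdeg_v (vdeg_ld F1 x) addKn.
  exact: (minvdeg_assign_lit_le_f muF1 satF1 defF1 xF1 lt_x w0F1 w0v vf).
have [[ld_t f_t] [ld_f f_f]] := (bound true, bound false).
have m_le_sum : m <= (ld F1 (v, true) + ld F1 (v, false))%N.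
  by rewrite -vdeg_v in m_le1.
have [e0 [e1 pdp_e]] := pdp_of_split vf m_ge4 m_le_sum
  (introT andP (conj (ld_ge2 true) ld_t)) (introT andP (conj (ld_ge2 false) ld_f)) f_t f_f.
exact: no_pdp pdp_e.
Qed.

End Descent.

Theorem theorem13p10 (k m : nat) (f : nat -> natinf) :
  (2 <= k)%N -> (4 <= m)%N -> valid_bounds_function f ->
  (forall e0 e1 : nat, ~ pdp f k m e0 e1) ->
  forall s : natinf, is_mu k s -> le_inf s (Some m.-1).
Proof.
move=> _ m_ge4 vf no_pdp s [_ least_s]; apply: least_s => F muF defF varF /=.
by rewrite -ltnS prednK ?(MU_minvdeg_lt vf m_ge4 no_pdp) // (leq_trans _ m_ge4).
Qed.
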